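(* Let $G$ be a $(P_5,\text{chair})$-free graph and let $C=v_1v_2v_3v_4v_5v_1$ be an induced $C_5$ in $G$. Let $1\le i\le 5$, let $u,v\in S_4(i)$ with $uv\notin E(G)$, and let $s\in R_i=S^1_3(i+1)\cup S^1_3(i-1)\cup S^2_3(i)\cup S_4(i+1)\cup S_4(i-1)\cup S_5$. Then $s$ is adjacent to at least one of $u,v$.
   Context: All graphs are finite and simple; $P_5$ is the path on 5 vertices; the chair is a $P_4$ plus a vertex adjacent to exactly one of the two middle vertices of the $P_4$; ''$H$-free'' means no induced subgraph isomorphic to $H$. Indices modulo 5; for $v\notin V(C)$ let $N_C(v)=N(v)\cap V(C)$. $S^1_3(j)=\{v\notin V(C): N_C(v)=\{v_{j-1},v_j,v_{j+1}\}\}$, $S^2_3(j)=\{v\notin V(C): N_C(v)=\{v_{j-2},v_j,v_{j+2}\}\}$, $S_4(j)=\{v\notin V(C): N_C(v)=\{v_{j-2},v_{j-1},v_{j+1},v_{j+2}\}\}$, $S_5=\{v\notin V(C): N_C(v)=V(C)\}$. *)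

From mathcomp Require Import all_boot.
Set Implicit Arguments. Unset Strict Implicit. Unset Printing Implicit Defensive.

Definition simple_graph (T : finType) (e : rel T) : Prop :=
  symmetric e /\ irreflexive e.

Definition has_induced (T : finType) (e : rel T) (n : nat) (h : rel 'I_n) : Prop :=
  exists f : 'I_n -> T, injective f /\ forall a b, e (f a) (f b) = h a b.

Definition free_of (T : finType) (e : rel T) (n : nat) (h : rel 'I_n) : Prop :=
  ~ has_induced e h.

Definition P5_rel : rel 'I_5 :=
  fun a b => (a.+1 == b :> nat) || (b.+1 == a :> nat).

(* chair : path 0-1-2-3 plus vertex 4 adjacent only to 1 *)
Definition chair_rel : rel 'I_5 :=
  fun a b =>
    [|| (a.+1 == b :> nat) && (b <= 3),
        (b.+1 == a :> nat) && (a <= 3),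
        (a == 4 :> nat) && (b == 1 :> nat) |
        (a == 1 :> nat) && (b == 4 :> nat)].

Definition sh (i : 'I_5) (k : nat) : 'I_5 := inord ((i + k) %% 5).

Definition induced_C5 (T : finType) (e : rel T) (v : 'I_5 -> T) : Prop :=
  injective v /\ forall i j, e (v i) (v j) = (j == sh i 1) || (i == sh j 1).

Definition NC (T : finType) (e : rel T) (v : 'I_5 -> T) (x : T) : {set 'I_5} :=
  [set j | e x (v j)].

Definition offC (T : finType) (v : 'I_5 -> T) (x : T) : bool :=
  x \notin [seq v j | j : 'I_5].

(* S^1_3(j): N_C = {j-1, j, j+1} *)
Definition S13 (T : finType) (e : rel T) (v : 'I_5 -> T) (j : 'I_5) (x : T) : Prop :=
  offC v x /\ NC e v x = [set sh j 4; j; sh j 1].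
(* S^2_3(j): N_C = {j-2, j, j+2} *)
Definition S23 (T : finType) (e : rel T) (v : 'I_5 -> T) (j : 'I_5) (x : T) : Prop :=
  offC v x /\ NC e v x = [set sh j 3; j; sh j 2].
(* S_4(j): N_C = {j-2, j-1, j+1, j+2} *)
Definition S4 (T : finType) (e : rel T) (v : 'I_5 -> T) (j : 'I_5) (x : T) : Prop :=
  offC v x /\ NC e v x = [set sh j 3; sh j 4; sh j 1; sh j 2].
Definition S5 (T : finType) (e : rel T) (v : 'I_5 -> T) (x : T) : Prop :=
  offC v x /\ NC e v x = [set: 'I_5].

From mathcomp Require Import all_boot.
Set Implicit Arguments. Unset Strict Implicit. Unset Printing Implicit Defensive.

(* Suppose s misses both u and w.  Since N_C(u) = N_C(w) = V(C) - v_i, for every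
   s in R_i other than S_5 there is a neighbour v_j (j = i+1 or i-1) of v_i on C
   with s ~ v_i and s !~ v_j; then u - v_j - v_i - s together with w ~ v_j is an
   induced chair.  For s in S_5 the chair is u - v_(i+2) - s - v_i with w ~ v_(i+2). *)

Section InducedSubgraph.
Variables (T : finType) (e : rel T).

Lemma has_induced_of_adj n (h : rel 'I_n) (f : 'I_n -> T) :
  (forall a b, e (f a) (f b) = h a b) ->
  (forall a b, f a = f b -> h a =1 h b -> a = b) ->
  has_induced e h.
Proof.
move=> fE twin_eq; exists f; split=> [a b fab|//].
by apply: (twin_eq _ _ fab) => c; rewrite -!fE fab.
Qed.

Hypothesis e_simple : simple_graph e.

Lemma induced_chair x0 x1 x2 x3 x4 : x0 != x4 ->
  e x0 x1 -> e x1 x2 -> e x2 x3 -> e x4 x1 ->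
  ~~ e x0 x2 -> ~~ e x0 x3 -> ~~ e x0 x4 -> ~~ e x1 x3 -> ~~ e x2 x4 ->
  ~~ e x3 x4 -> has_induced e chair_rel.
Proof.
have [sym irr] := e_simple.
move=> x04 e01 e12 e23 e41.
move=> /negbTE n02 /negbTE n03 /negbTE n04 /negbTE n13 /negbTE n24 /negbTE n34.
have adj := (e01, e12, e23, e41, n02, n03, n04, n13, n24, n34).
apply: (@has_induced_of_adj _ _ (fun a => nth x4 [:: x0; x1; x2; x3] a)).
  move=> [[|[|[|[|[|a]]]]] ?] [[|[|[|[|[|b]]]]] ?] //=; rewrite ?irr //;
  first [by rewrite ?adj | by rewrite sym ?adj].
(* x0 and x4 are the only twins of the chair; every other pair is separated
   by one of the vertices 0, 1, 2, 3. *)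
move=> [[|[|[|[|[|a]]]]] ?] [[|[|[|[|[|b]]]]] ?] //= x_ab twins;
  first [by apply: val_inj | by rewrite x_ab eqxx in x04
        | by have := twins (@Ordinal 5 0 isT) | by have := twins (@Ordinal 5 1 isT)
        | by have := twins (@Ordinal 5 2 isT) | by have := twins (@Ordinal 5 3 isT)].
Qed.

End InducedSubgraph.

Lemma val_sh (i : 'I_5) k : sh i k = (i + k) %% 5 :> nat.
Proof. by rewrite /sh /= inordK // ltn_mod. Qed.

Lemma sh0 (i : 'I_5) : sh i 0 = i.
Proof. by apply: ord_inj; rewrite val_sh addn0 modn_small. Qed.

Lemma shA (i : 'I_5) a b : sh (sh i a) b = sh i (a + b).
Proof. by apply: ord_inj; rewrite !val_sh modnDml addnA. Qed.

Lemma eq_sh (i : 'I_5) a b : (sh i a == sh i b) = (a == b %[mod 5]).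
Proof. by rewrite -val_eqE /= !val_sh eqn_modDl. Qed.

Lemma eq_sh_id (i : 'I_5) a : (sh i a == i) = (a == 0 %[mod 5]).
Proof. by rewrite -{2}(sh0 i) eq_sh. Qed.

Lemma eq_id_sh (i : 'I_5) a : (i == sh i a) = (0 == a %[mod 5]).
Proof. by rewrite -{1}(sh0 i) eq_sh. Qed.

Definition sh_simpl := (shA, eq_sh, eq_sh_id, eq_id_sh).

Lemma in_NC (T : finType) (e : rel T) (v : 'I_5 -> T) x j :
  (j \in NC e v x) = e x (v j).
Proof. by rewrite inE. Qed.

Lemma C5_adj_sh (T : finType) (e : rel T) (v : 'I_5 -> T) (i : 'I_5) a b :
  induced_C5 e v ->
  e (v (sh i a)) (v (sh i b)) = (b == a + 1 %[mod 5]) || (a == b + 1 %[mod 5]).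
Proof. by case=> _ vE; rewrite vE !sh_simpl. Qed.

Section S4Pair.
Variables (T : finType) (e : rel T) (v : 'I_5 -> T) (i : 'I_5) (u w : T).
Hypotheses (e_simple : simple_graph e) (chair_free : free_of e chair_rel).
Hypotheses (C5 : induced_C5 e v) (Su : S4 e v i u) (Sw : S4 e v i w).
Hypotheses (uw : u != w) (nuw : ~~ e u w).

Lemma S4_pair_adj_of_missed_neighbour s k : (k == 1) || (k == 4) ->
  e s (v i) -> ~~ e s (v (sh i k)) -> e s u || e s w.
Proof.
have [sym _] := e_simple.
move=> k14 s_i s_ik; apply/negbNE/negP => /norP [su sw].
apply: chair_free.
apply: (@induced_chair _ _ e_simple u (v (sh i k)) (v (sh i 0)) s w) => //.
all: case/orP: k14 s_ik => /eqP-> s_ik.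
all: rewrite 1?[e _ s]sym 1?[e (v _) w]sym ?C5_adj_sh ?sh0 //.
all: by rewrite -in_NC ?(proj2 Su) ?(proj2 Sw) !inE !sh_simpl.
Qed.

Lemma S4_pair_adj_of_S5 s : NC e v s = [set: 'I_5] -> e s u || e s w.
Proof.
have [sym _] := e_simple.
move=> Ns; apply/negbNE/negP => /norP [su sw].
apply: chair_free.
apply: (@induced_chair _ _ e_simple u (v (sh i 2)) s (v (sh i 0)) w) => //.
all: rewrite 1?[e u s]sym 1?[e (v _) _]sym ?C5_adj_sh //.
all: by rewrite -in_NC ?Ns ?(proj2 Su) ?(proj2 Sw) !inE ?sh_simpl.
Qed.

End S4Pair.

Theorem mainTheorem11 (T : finType) (e : rel T) (v : 'I_5 -> T) (i : 'I_5)
    (u w s : T) :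
  simple_graph e ->
  free_of e P5_rel -> free_of e chair_rel ->
  induced_C5 e v ->
  S4 e v i u -> S4 e v i w -> u != w -> ~~ e u w ->
  (S13 e v (sh i 1) s \/ S13 e v (sh i 4) s \/ S23 e v i s \/
   S4 e v (sh i 1) s \/ S4 e v (sh i 4) s \/ S5 e v s) ->
  e s u || e s w.
Proof.
move=> e_simple _ chair_free C5 Su Sw uw nuw.
have adj_of_missed :=
  S4_pair_adj_of_missed_neighbour e_simple chair_free C5 Su Sw uw nuw.
have adj_of_S5 := S4_pair_adj_of_S5 e_simple chair_free C5 Su Sw uw nuw.
case=> [[_ Ns] | [[_ Ns] | [[_ Ns] | [[_ Ns] | [[_ Ns] | [_ /adj_of_S5 //]]]]]];
  [apply: (adj_of_missed _ 4) | apply: (adj_of_missed _ 1) | apply: (adj_of_missed _ 4)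
  | apply: (adj_of_missed _ 1) | apply: (adj_of_missed _ 4)] => //;
  by rewrite -in_NC Ns !inE ?sh_simpl ?eqxx.
Qed.
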